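(* Let $\mathcal{F}$ be a fusion ring with structure constants $(N_{i,j}^k)$, index $1$ being the unit. Suppose indices $i_1,\dots,i_9$ satisfy $N_{i_4,i_1}^{i_6},\ N_{i_5,i_4}^{i_2},\ N_{i_5,i_6}^{i_3},\ N_{i_7,i_9}^{i_1},\ N_{i_2,i_7}^{i_8},\ N_{i_8,i_9}^{i_3}\neq0$ and $N_{i_2,i_1}^{i_3}=0$. Then $i_j\neq1$ for all $j\in\{4,\dots,9\}$.
   Context: A fusion ring is a ring which is a free $\mathbb{Z}$-module with finite basis $\{b_1,\dots,b_r\}$, $b_ib_j=\sum_kN_{i,j}^kb_k$, $N_{i,j}^k\in\mathbb{Z}_{\ge0}$, associative, unit $b_1$, duality $i\mapsto i^*$ with $N_{i,k}^1=N_{k,i}^1=\delta_{i^*,k}$, and Frobenius reciprocity $N_{i,j}^k=N_{i^*,k}^j=N_{k,j^*}^i$. *)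

From mathcomp Require Import all_boot.
Set Implicit Arguments. Unset Strict Implicit. Unset Printing Implicit Defensive.

(* A fusion ring of rank r, presented by its structure constants on the
   finite basis indexed by the finite type I; [one] is the index of the unit
   b_1, [dual] the duality i |-> i^*, and N i j k = N_{i,j}^k, i.e.
   b_i b_j = \sum_k N i j k b_k.  Nonnegativity is built in (nat). *)
Definition is_fusion_ring (I : finType) (one : I) (dual : I -> I)
    (N : I -> I -> I -> nat) : Prop :=
  (forall i j l m : I,
      \sum_(k : I) N i j k * N k l m = \sum_(k : I) N j l k * N i k m)
  /\ (forall j k : I, N one j k = (j == k) /\ N j one k = (j == k))
  /\ (forall i k : I, N i k one = (dual i == k) /\ N k i one = (dual i == k))
  /\ (forall i j k : I, N i j k = N (dual i) k j /\ N i j k = N k (dual j) i).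

(* If one of the indices were the unit, the unit and duality axioms (via
   Frobenius reciprocity in the dual cases) would identify the two ends of a
   path of nonzero structure constants, forcing N_{i_2,i_1}^{i_3} to equal one
   of the six nonzero constants. *)
From mathcomp Require Import all_boot.

Set Implicit Arguments.
Unset Strict Implicit.
Unset Printing Implicit Defensive.

Section UnitFreePaths.

Variables (I : finType) (one : I) (dual : I -> I) (N : I -> I -> I -> nat).

Hypothesis unitN : forall j k : I, N one j k = (j == k) /\ N j one k = (j == k).
Hypothesis dualN :
  forall i k : I, N i k one = (dual i == k) /\ N k i one = (dual i == k).
Hypothesis frobeniusN :
  forall i j k : I, N i j k = N (dual i) k j /\ N i j k = N k (dual j) i.

Lemma unitl_neq0 j k : N one j k <> 0 -> j = k.
Proof. by case: (unitN j k) => -> _; case: eqP. Qed.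

Lemma unitr_neq0 j k : N j one k <> 0 -> j = k.
Proof. by case: (unitN j k) => _ ->; case: eqP. Qed.

Lemma dual_neq0 i k : N i k one <> 0 -> dual i = k.
Proof. by case: (dualN i k) => -> _; case: eqP. Qed.

Lemma frobenius_duall i j k : N (dual i) k j = N i j k.
Proof. by case: (frobeniusN i j k). Qed.

Lemma frobenius_dualr i j k : N k (dual j) i = N i j k.
Proof. by case: (frobeniusN i j k). Qed.

Lemma unit_free_right_path a b c x y z :
  N a b c <> 0 -> N x c z <> 0 -> N x a y <> 0 -> N y b z = 0 ->
  [/\ a <> one, x <> one & c <> one].
Proof.
move=> Nabc Nxcz Nxay Nybz; split=> E; rewrite {}E in Nabc Nxcz Nxay.
- by apply: Nxcz; rewrite -(unitl_neq0 Nabc) (unitr_neq0 Nxay).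
- by apply: Nabc; rewrite (unitl_neq0 Nxay) (unitl_neq0 Nxcz).
- apply: Nxay.
  by rewrite -frobenius_dualr (dual_neq0 Nabc) (unitr_neq0 Nxcz).
Qed.

Lemma unit_free_left_path a b c x y z :
  N x a y <> 0 -> N y b z <> 0 -> N a b c <> 0 -> N x c z = 0 ->
  [/\ a <> one, y <> one & b <> one].
Proof.
move=> Nxay Nybz Nabc Nxcz; split=> E; rewrite {}E in Nxay Nybz Nabc.
- by apply: Nybz; rewrite -(unitr_neq0 Nxay) (unitl_neq0 Nabc).
- apply: Nabc.
  by rewrite -(dual_neq0 Nxay) (unitl_neq0 Nybz) frobenius_duall.
- by apply: Nxay; rewrite (unitr_neq0 Nabc) (unitr_neq0 Nybz).
Qed.

End UnitFreePaths.

Theorem lemma7p18 (I : finType) (one : I) (dual : I -> I)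
    (N : I -> I -> I -> nat) :
  is_fusion_ring one dual N ->
  forall i1 i2 i3 i4 i5 i6 i7 i8 i9 : I,
    N i4 i1 i6 <> 0 -> N i5 i4 i2 <> 0 -> N i5 i6 i3 <> 0 ->
    N i7 i9 i1 <> 0 -> N i2 i7 i8 <> 0 -> N i8 i9 i3 <> 0 ->
    N i2 i1 i3 = 0 ->
    i4 <> one /\ i5 <> one /\ i6 <> one /\ i7 <> one /\ i8 <> one /\ i9 <> one.
Proof.
move=> [_ [unitN [dualN frobeniusN]]] i1 i2 i3 i4 i5 i6 i7 i8 i9.
move=> N416 N542 N563 N791 N278 N893 N213.
have [] := unit_free_right_path unitN dualN frobeniusN N416 N563 N542 N213.
have [] := unit_free_left_path unitN dualN frobeniusN N278 N893 N791 N213.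
by [].
Qed.
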